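(* Let $\mathbf{A}\in\mathcal{PCM}_n$ be a double perturbed pairwise comparison matrix. Then its principal right eigenvector $\mathbf{w}^{EM}$ is efficient.
   Context: A pairwise comparison matrix (PCM) of size $n\times n$ is a matrix $\mathbf{A}=[a_{ij}]$ with $a_{ij}>0$ and $a_{ij}=1/a_{ji}$ for all $i,j$; the set of these is $\mathcal{PCM}_n$. A PCM is consistent if $a_{ik}a_{kj}=a_{ij}$ for all $i,j,k$. A PCM is double perturbed if it differs from a consistent PCM in two elements and their reciprocals, i.e. it can be made consistent by altering two entries (and their reciprocal entries). The principal right eigenvector $\mathbf{w}^{EM}$ is the positive (Perron) eigenvector: $\mathbf{A}\mathbf{w}^{EM}=\lambda_{\max}\mathbf{w}^{EM}$, $\lambda_{\max}$ the Perron eigenvalue. A positive weight vector $\mathbf{w}=(w_1,\dots,w_n)^T$ is efficient if there is no other positive vector $\mathbf{w}'$ with $|a_{ij}-w'_i/w'_j|\le |a_{ij}-w_i/w_j|$ for all $i,j$ and $|a_{k\ell}-w'_k/w'_\ell|< |a_{k\ell}-w_k/w_\ell|$ for some $k,\ell$. *)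

From HB Require Import structures.
From mathcomp Require Import all_boot all_order all_algebra.
Set Implicit Arguments. Unset Strict Implicit. Unset Printing Implicit Defensive.
Import Order.TTheory GRing.Theory Num.Theory.
Local Open Scope ring_scope.

Definition is_PCM (R : realFieldType) (n : nat) (A : 'M[R]_n) : Prop :=
  forall i j, 0 < A i j /\ A i j = (A j i)^-1.

Definition consistent (R : realFieldType) (n : nat) (A : 'M[R]_n) : Prop :=
  forall i j k, A i k * A k j = A i j.

Definition double_perturbed (R : realFieldType) (n : nat) (A : 'M[R]_n) : Prop :=
  exists B : 'M[R]_n, is_PCM B /\ consistent B /\
  exists i1 j1 i2 j2 : 'I_n,
    [/\ i1 != j1, i2 != j2,
        ~ ((i1 == i2) && (j1 == j2) || (i1 == j2) && (j1 == i2)),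
        A i1 j1 != B i1 j1 & A i2 j2 != B i2 j2] /\
        forall i j, A i j != B i j ->
          [\/ (i == i1) && (j == j1), (i == j1) && (j == i1),
              (i == i2) && (j == j2) | (i == j2) && (j == i2)].

Definition positive_vec (R : realFieldType) (n : nat) (w : 'cV[R]_n) : Prop :=
  forall i, 0 < w i 0.

Definition real_eigenvalue (R : realFieldType) (n : nat) (A : 'M[R]_n) (mu : R) : Prop :=
  exists v : 'cV[R]_n, v != 0 /\ A *m v = mu *: v.

Definition principal_eigenvector (R : realFieldType) (n : nat) (A : 'M[R]_n)
  (w : 'cV[R]_n) : Prop :=
  positive_vec w /\
  exists lam : R, A *m w = lam *: w /\
    forall mu, real_eigenvalue A mu -> mu <= lam.

Definition efficient (R : realFieldType) (n : nat) (A : 'M[R]_n) (w : 'cV[R]_n) : Prop :=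
  positive_vec w /\
  ~ exists w' : 'cV[R]_n, positive_vec w' /\
      (forall i j, `|A i j - w' i 0 / w' j 0| <= `|A i j - w i 0 / w j 0|) /\
      (exists k l, `|A k l - w' k 0 / w' l 0| < `|A k l - w k 0 / w l 0|).

From mathcomp Require Import all_boot all_order all_algebra.
From mathcomp Require Import ring lra.
Set Implicit Arguments. Unset Strict Implicit. Unset Printing Implicit Defensive.
Import Order.TTheory GRing.Theory Num.Theory.
Local Open Scope ring_scope.

(** The digraph with an arc i -> j whenever a_ij <= w_i / w_j is invariant under the
    diagonal similarity A |-> D^-1 A D, w |-> D^-1 w. Choosing D = diag(b) where the
    consistent matrix is (b_i / b_j) turns A into a PCM E whose entries are 1 outside the
    two perturbed positions, with positive eigenvector u = D^-1 w. With s = sum_j u_j the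
    eigen-equations read lam u_i = s + sum_j (e_ij - 1) u_j, so all rows outside the
    perturbed positions give lam u_i = s, and differences of rows determine the sign of
    u_i - e_ij u_j, i.e. the arcs. Whether the two perturbed pairs share an index or not,
    and for every position of the perturbed entries relative to 1, this exhibits a cycle
    through the perturbed indices which every other index joins, so the digraph is
    strongly connected. A vector dominating w would make w'/w nondecreasing along arcs,
    hence constant, which contradicts strict improvement: w is efficient. *)

Section EfficiencyGraph.
Variables (R : realFieldType) (n : nat).
Implicit Types (E : 'I_n -> 'I_n -> R) (u : 'I_n -> R) (g : rel 'I_n).

(* The digraph of Blanquero, Carrizosa and Conde (2006). *)
Definition efficiency_graph E u : rel 'I_n := fun i j => E i j <= u i / u j.

Definition strongly_connected g := forall i j, connect g i j.

Lemma connect_homo_le g (r : 'I_n -> R) :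
  {homo r : i j / g i j >-> i <= j} -> forall i j, connect g i j -> r i <= r j.
Proof.
move=> r_homo i j /connectP[s gs ->]; elim: s i gs => //= k s IHs i /andP[gik /IHs].
exact: le_trans (r_homo _ _ gik).
Qed.

Lemma strongly_connected_hub g h :
  (forall i, connect g h i /\ connect g i h) -> strongly_connected g.
Proof. by move=> hub i j; apply: connect_trans (proj2 (hub i)) (proj1 (hub j)). Qed.

Lemma le_of_dist_le (a b c : R) : a <= b -> `|a - c| <= `|a - b| -> c <= b.
Proof.
move=> ab; rewrite distrC [`|a - b|]distrC [`|b - a|]ger0_norm ?subr_ge0 // => le_cb.
by rewrite -(lerD2r (- a)); apply: le_trans le_cb; apply: ler_norm.
Qed.

Lemma efficient_of_strongly_connected (A : 'M[R]_n) (w : 'cV[R]_n) :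
  positive_vec w -> strongly_connected (efficiency_graph A (w ^~ 0)) ->
  efficient A w.
Proof.
move=> w_gt0 conn; split=> // -[w' [w'_gt0 [dom [k [l]]]]].
pose r i := w' i 0 / w i 0.
have r_homo : {homo r : i j / efficiency_graph A (w ^~ 0) i j >-> i <= j}.
  move=> i j /le_of_dist_le /(_ (dom i j)).
  rewrite /r ler_pdivrMr // mulrAC ler_pdivlMr // => le_w'w.
  by rewrite ler_pdivrMr // mulrAC ler_pdivlMr // [w' j 0 * _]mulrC.
have r_kl : r k = r l.
  by apply/eqP; rewrite eq_le !(connect_homo_le r_homo).
have w'E i : w' i 0 = r i * w i 0 by rewrite /r divfK // lt0r_neq0.
have r_neq0 : r l != 0 by rewrite lt0r_neq0 // divr_gt0.
by rewrite !w'E r_kl invfM mulrACA mulfV // mul1r ltxx.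
Qed.

End EfficiencyGraph.

Section Rescaling.
Variables (R : realFieldType) (n : nat).
Implicit Types (E : 'I_n -> 'I_n -> R) (u b : 'I_n -> R).

Lemma efficiency_graph_scale E u b : (forall i, 0 < b i) ->
  efficiency_graph (fun i j => E i j / (b i / b j)) (fun i => u i / b i) =2
  efficiency_graph E u.
Proof.
move=> b_gt0 i j; rewrite /efficiency_graph.
have -> : u i / b i / (u j / b j) = u i / u j / (b i / b j).
  by rewrite !invf_div !mulf_div; congr (_ / _); rewrite mulrC.
by rewrite ler_pM2r // invr_gt0 divr_gt0.
Qed.

Lemma eigen_scale E u b lam : (forall i, b i != 0) ->
  (forall i, \sum_j E i j * u j = lam * u i) ->
  forall i, \sum_j E i j / (b i / b j) * (u j / b j) = lam * (u i / b i).
Proof.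
move=> b_neq0 eig i; rewrite mulrA -eig mulr_suml; apply: eq_bigr => j _.
by field; rewrite !b_neq0.
Qed.

Lemma consistent_PCM_ratio (B : 'M[R]_n) : is_PCM B -> consistent B ->
  forall k i j, B i j = B i k / B j k.
Proof. by move=> B_PCM B_cons k i j; rewrite -(B_cons i j k) (proj2 (B_PCM k j)). Qed.

End Rescaling.

Definition on_pair n (a b i j : 'I_n) := (i == a) && (j == b) || (i == b) && (j == a).

Section OnPair.
Variables (n : nat) (a b : 'I_n).

Lemma on_pairC : on_pair a b =2 on_pair b a.
Proof. by move=> i j; rewrite /on_pair orbC. Qed.

Lemma on_pair_l j : a != b -> on_pair a b a j = (j == b).
Proof. by move=> ab; rewrite /on_pair eqxx (negbTE ab) orbF. Qed.

Lemma on_pair_r j : a != b -> on_pair a b b j = (j == a).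
Proof. by move=> ab; rewrite /on_pair eqxx eq_sym (negbTE ab). Qed.

Lemma on_pairNl i j : i != a -> i != b -> on_pair a b i j = false.
Proof. by move=> /negbTE ia /negbTE ib; rewrite /on_pair ia ib. Qed.

Lemma on_pairNr i j : j != a -> j != b -> on_pair a b i j = false.
Proof. by move=> /negbTE ja /negbTE jb; rewrite /on_pair ja jb !andbF. Qed.

End OnPair.

Section PerturbedEigenvector.
Variables (R : realFieldType) (n : nat) (E : 'I_n -> 'I_n -> R) (u : 'I_n -> R) (lam : R).
Hypotheses (u_gt0 : forall i, 0 < u i) (E_gt0 : forall i j, 0 < E i j)
  (E_recip : forall i j, E i j = (E j i)^-1)
  (E_eigen : forall i, \sum_j E i j * u j = lam * u i).

Local Notation s := (\sum_j u j).
Local Notation G := (efficiency_graph E u).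

Lemma eigenvalue_gt0 (i : 'I_n) : 0 < lam.
Proof.
rewrite -(pmulr_lgt0 _ (u_gt0 i)) -E_eigen (bigD1 i) //=.
by rewrite ltr_wpDr ?mulr_gt0 // sumr_ge0 // => j _; rewrite mulr_ge0 // ltW.
Qed.

Lemma eigen_row i : lam * u i = s + \sum_j (E i j - 1) * u j.
Proof. by rewrite -E_eigen -big_split; apply: eq_bigr => j _ /=; ring. Qed.

Lemma eigen_row0 i : (forall j, E i j = 1) -> lam * u i = s.
Proof.
by move=> Ei1; rewrite eigen_row [X in s + X]big1 ?addr0 // => j _; rewrite Ei1 subrr mul0r.
Qed.

Lemma eigen_row1 i a : (forall j, j != a -> E i j = 1) ->
  lam * u i = s + (E i a - 1) * u a.
Proof.
move=> Ei1; rewrite eigen_row; congr (_ + _).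
by rewrite (bigD1 a) //= big1 ?addr0 // => j /Ei1 ->; rewrite subrr mul0r.
Qed.

Lemma eigen_row2 i a b : a != b -> (forall j, j != a -> j != b -> E i j = 1) ->
  lam * u i = s + (E i a - 1) * u a + (E i b - 1) * u b.
Proof.
move=> ab Ei1; rewrite eigen_row -addrA; congr (_ + _).
rewrite (bigD1 a) //= (bigD1 b) 1?eq_sym //= big1 ?addr0 // => j /andP[/Ei1 /[apply] ->].
by rewrite subrr mul0r.
Qed.

Lemma efficiency_graphE i j : G i j = (E i j * u j <= u i).
Proof. exact: ler_pdivlMr. Qed.

Lemma efficiency_graph_recipE i j : G j i = (u i <= E i j * u j).
Proof.
by rewrite efficiency_graphE E_recip mulrC ler_pdivrMr // mulrC.
Qed.

Lemma efficiency_graph1 i j : E i j = 1 -> G i j = (u j <= u i).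
Proof. by move=> Eij; rewrite efficiency_graphE Eij mul1r. Qed.

Lemma ler_of_eigen_diff a b D : 0 < lam -> lam * (b - a) = D -> 0 <= D -> a <= b.
Proof. by move=> lam_gt0 <-; rewrite pmulr_rge0 // subr_ge0. Qed.

Lemma ger_of_eigen_diff a b D : 0 < lam -> lam * (a - b) = D -> D <= 0 -> a <= b.
Proof. by move=> lam_gt0 <-; rewrite pmulr_rle0 // subr_le0. Qed.

Section Star.
Variables c p q : 'I_n.
Hypothesis cpq_uniq : uniq [:: c; p; q].
Hypothesis E_star : forall i j, E i j != 1 -> on_pair c p i j || on_pair c q i j.

Local Notation x := (E c p).
Local Notation y := (E c q).
Local Notation free i := (i \notin [:: c; p; q]).
Local Notation Rf := (\sum_(j | free j) u j).

Let cp : c != p. Proof. by case/and3P: cpq_uniq; rewrite !inE negb_or => /andP[]. Qed.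
Let cq : c != q. Proof. by case/and3P: cpq_uniq; rewrite !inE negb_or => /andP[]. Qed.
Let pq : p != q. Proof. by case/and3P: cpq_uniq; rewrite !inE. Qed.
Let lam_gt0 : 0 < lam. Proof. exact: eigenvalue_gt0 c. Qed.
Let Rf_ge0 : 0 <= Rf. Proof. by rewrite sumr_ge0 // => j _; apply: ltW. Qed.

Lemma star_E1 i j : ~~ (on_pair c p i j || on_pair c q i j) -> E i j = 1.
Proof. by move=> off; apply/eqP; apply: contraNT off; apply: E_star. Qed.

Lemma star_row_c : lam * u c = s + (x - 1) * u p + (y - 1) * u q.
Proof.
apply: eigen_row2 pq _ => j jp jq; apply: star_E1.
by rewrite !on_pair_l // negb_or jp jq.
Qed.

Lemma star_row_p : lam * u p = s + (x^-1 - 1) * u c.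
Proof.
rewrite -E_recip; apply: eigen_row1 => j jc; apply: star_E1.
by rewrite on_pair_r // on_pairNl ?orbF // eq_sym.
Qed.

Lemma star_row_q : lam * u q = s + (y^-1 - 1) * u c.
Proof.
rewrite -E_recip; apply: eigen_row1 => j jc; apply: star_E1.
by rewrite on_pair_r // on_pairNl ?orbF // eq_sym.
Qed.

Lemma star_E_free i j : free i -> E i j = 1 /\ E j i = 1.
Proof.
rewrite !inE !negb_or => /and3P[ic ip iq].
by split; apply: star_E1; [rewrite !on_pairNl | rewrite !on_pairNr].
Qed.

Lemma star_row_free i : free i -> lam * u i = s.
Proof. by move=> i_free; apply: eigen_row0 => j; case: (star_E_free j i_free). Qed.

Lemma star_sum : s = u c + u p + u q + Rf.
Proof.
rewrite (bigD1 c) //= (bigD1 p) 1?eq_sym //= (bigD1 q) /=; last by rewrite eq_sym cq eq_sym pq.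
by rewrite !addrA; congr (_ + _); apply: eq_bigl => j; rewrite !inE !negb_or andbA.
Qed.

Lemma star_free_or_sum0 : (exists k, free k) \/ Rf = 0.
Proof.
case: (pickP (fun k => free k)) => [k k_free | no_free]; first by left; exists k.
by right; rewrite big_pred0.
Qed.

Lemma star_E_pq : E p q = 1.
Proof.
by apply: star_E1; rewrite on_pair_r // on_pairNl ?orbF // eq_sym.
Qed.

Lemma star_diff_cp : lam * (u c - x * u p) = (y - x) * u q + (1 - x) * Rf.
Proof.
have x_row_p : x * (lam * u p) = x * s + (1 - x) * u c.
  by rewrite star_row_p mulrDr mulrA mulrBr mulfV ?mulr1 // gt_eqF.
by have := star_row_c; rewrite star_sum in x_row_p *; lra.
Qed.

Lemma star_diff_cq : lam * (u c - y * u q) = (x - y) * u p + (1 - y) * Rf.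
Proof.
have y_row_q : y * (lam * u q) = y * s + (1 - y) * u c.
  by rewrite star_row_q mulrDr mulrA mulrBr mulfV ?mulr1 // gt_eqF.
by have := star_row_c; rewrite star_sum in y_row_q *; lra.
Qed.

Lemma star_diff_pq : lam * (u p - u q) = (x^-1 - y^-1) * u c.
Proof. by have := star_row_p; have := star_row_q; lra. Qed.

Lemma star_diff_free i : free i ->
  [/\ lam * (u c - u i) = (x - 1) * u p + (y - 1) * u q,
      lam * (u p - u i) = (x^-1 - 1) * u c
    & lam * (u q - u i) = (y^-1 - 1) * u c].
Proof.
move/star_row_free=> row_i.
by have := star_row_c; have := star_row_p; have := star_row_q; split; lra.
Qed.

Lemma star_arc_pq : x <= y -> G p q.
Proof.
move=> xy; rewrite efficiency_graph1 ?star_E_pq //.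
apply: ler_of_eigen_diff lam_gt0 star_diff_pq _.
by rewrite mulr_ge0 ?subr_ge0 ?lef_pV2 ?posrE // ltW.
Qed.

Lemma star_arc_cp : x <= y -> x <= 1 \/ Rf = 0 -> G c p.
Proof.
move=> xy x_le1_or; rewrite efficiency_graphE.
apply: ler_of_eigen_diff lam_gt0 star_diff_cp _.
case: x_le1_or => [x_le1 | ->]; last by rewrite mulr0 addr0 mulr_ge0 ?subr_ge0 // ltW.
by rewrite addr_ge0 ?mulr_ge0 ?subr_ge0 // ltW.
Qed.

Lemma star_arc_qc : x <= y -> 1 <= y \/ Rf = 0 -> G q c.
Proof.
move=> xy y_ge1_or; rewrite efficiency_graph_recipE.
apply: ger_of_eigen_diff lam_gt0 star_diff_cq _.
case: y_ge1_or => [y_ge1 | ->]; last by rewrite mulr0 addr0 mulr_le0_ge0 ?subr_le0 // ltW.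
by have := u_gt0 p; have := Rf_ge0; nra.
Qed.

Lemma star_hub : connect G c p -> connect G p q -> connect G q c ->
  (forall i, free i -> connect G c i /\ connect G i c) -> strongly_connected G.
Proof.
move=> c_p p_q q_c hub_free; apply: (strongly_connected_hub (h := c)) => i.
have [/hub_free // | ] := boolP (free i).
rewrite !inE negbK => /or3P[] /eqP ->; first by rewrite connect0.
  by split=> //; apply: connect_trans p_q q_c.
by split=> //; apply: connect_trans c_p p_q.
Qed.

Lemma star_graph_free i j : free i -> G i j = (u j <= u i) /\ G j i = (u i <= u j).
Proof. by case/(star_E_free j)=> Eij Eji; rewrite !efficiency_graph1. Qed.

Lemma star_strongly_connected_lt1 : x <= y -> y < 1 -> strongly_connected G.
Proof.
move=> xy y_lt1; have x_le1 : x <= 1 by rewrite ltW // (le_lt_trans xy).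
have q_i i : free i -> G q i.
  move=> i_free; have [_ _ diff_q] := star_diff_free i_free.
  rewrite (star_graph_free q i_free).2; apply: ler_of_eigen_diff lam_gt0 diff_q _.
  by rewrite mulr_ge0 ?subr_ge0 ?invf_ge1 // ltW.
have i_c i : free i -> G i c.
  move=> i_free; have [diff_c _ _] := star_diff_free i_free.
  rewrite (star_graph_free c i_free).1; apply: ger_of_eigen_diff lam_gt0 diff_c _.
  by have := u_gt0 p; have := u_gt0 q; nra.
have c_q : connect G c q.
  by apply: connect_trans (connect1 (star_arc_cp xy _)) (connect1 (star_arc_pq xy)); left.
have q_c : connect G q c.
  case: star_free_or_sum0 => [[k k_free] | Rf0].
    exact: connect_trans (connect1 (q_i k k_free)) (connect1 (i_c k k_free)).
  by apply/connect1/star_arc_qc => //; right.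
apply: star_hub => // [|| i i_free].
- by apply/connect1/star_arc_cp => //; left.
- exact/connect1/star_arc_pq.
- by split; [apply: connect_trans c_q (connect1 (q_i i i_free)) | apply/connect1/i_c].
Qed.

Lemma star_strongly_connected_mixed : x < 1 -> 1 < y -> strongly_connected G.
Proof.
move=> x_lt1 y_gt1; have xy : x <= y by rewrite ltW // (lt_trans x_lt1).
have c_p : G c p by apply: star_arc_cp => //; left; apply: ltW.
have q_c : G q c by apply: star_arc_qc => //; left; apply: ltW.
apply: star_hub; [exact: connect1 | exact/connect1/star_arc_pq | exact: connect1 |].
move=> i i_free; have [_ diff_p diff_q] := star_diff_free i_free.
have p_i : G p i.
  rewrite (star_graph_free p i_free).2; apply: ler_of_eigen_diff lam_gt0 diff_p _.
  by rewrite mulr_ge0 ?subr_ge0 ?invf_ge1 // ltW.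
have i_q : G i q.
  rewrite (star_graph_free q i_free).1; apply: ger_of_eigen_diff lam_gt0 diff_q _.
  by rewrite mulr_le0_ge0 ?subr_le0 ?invf_le1 // ltW.
split; first exact: connect_trans (connect1 c_p) (connect1 p_i).
exact: connect_trans (connect1 i_q) (connect1 q_c).
Qed.

Lemma star_strongly_connected_gt1 : x <= y -> 1 < x -> strongly_connected G.
Proof.
move=> xy x_gt1; have y_ge1 : 1 <= y by rewrite ltW // (lt_le_trans x_gt1).
have c_i i : free i -> G c i.
  move=> i_free; have [diff_c _ _] := star_diff_free i_free.
  rewrite (star_graph_free c i_free).2; apply: ler_of_eigen_diff lam_gt0 diff_c _.
  by have := u_gt0 p; have := u_gt0 q; nra.
have i_p i : free i -> G i p.
  move=> i_free; have [_ diff_p _] := star_diff_free i_free.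
  rewrite (star_graph_free p i_free).1; apply: ger_of_eigen_diff lam_gt0 diff_p _.
  by rewrite mulr_le0_ge0 ?subr_le0 ?invf_le1 // ltW.
have q_c : G q c by apply: star_arc_qc => //; left.
have p_c : connect G p c.
  exact: connect_trans (connect1 (star_arc_pq xy)) (connect1 q_c).
apply: star_hub; [| exact/connect1/star_arc_pq | exact: connect1 |].
- case: star_free_or_sum0 => [[k k_free] | Rf0].
    exact: connect_trans (connect1 (c_i k k_free)) (connect1 (i_p k k_free)).
  by apply/connect1/star_arc_cp => //; right.
- by move=> i i_free; split; [apply/connect1/c_i | apply: connect_trans p_c; apply/connect1/i_p].
Qed.

End Star.

Lemma star_strongly_connected c p q : uniq [:: c; p; q] -> E c p != 1 -> E c q != 1 ->
  (forall i j, E i j != 1 -> on_pair c p i j || on_pair c q i j) ->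
  strongly_connected G.
Proof.
wlog xy : p q / E c p <= E c q.
  move=> wlog_xy cpq Ecp Ecq E_star.
  have [xy | /ltW yx] := leP (E c p) (E c q); first exact: wlog_xy xy cpq Ecp Ecq E_star.
  apply: wlog_xy yx _ Ecq Ecp _; last by move=> i j /E_star; rewrite orbC.
  by rewrite (perm_uniq (_ : perm_eq _ [:: c; p; q])) // !perm_cons (perm_catC [:: q]).
move=> cpq Ecp Ecq E_star.
have [y_lt1 | y_gt1 | y_eq1] := ltgtP (E c q) 1; last by rewrite y_eq1 eqxx in Ecq.
  exact: (star_strongly_connected_lt1 cpq E_star xy y_lt1).
have [x_lt1 | x_gt1 | x_eq1] := ltgtP (E c p) 1; last by rewrite x_eq1 eqxx in Ecp.
  exact: (star_strongly_connected_mixed cpq E_star x_lt1 y_gt1).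
exact: (star_strongly_connected_gt1 cpq E_star xy x_gt1).
Qed.

Section Disjoint.
Variables p q r t : 'I_n.
Hypothesis pqrt_uniq : uniq [:: p; q; r; t].
Hypothesis E_disjoint : forall i j, E i j != 1 -> on_pair p q i j || on_pair r t i j.

Local Notation x := (E p q).
Local Notation y := (E r t).
Local Notation free i := (i \notin [:: p; q; r; t]).
Local Notation Rf := (\sum_(j | free j) u j).

Let distinct : [/\ p != q, p != r, p != t & [/\ q != r, q != t & r != t]].
Proof.
have := pqrt_uniq; rewrite /= !inE !negb_or.
by case/and4P=> /and3P[-> -> ->] /andP[-> ->] ->.
Qed.
Let lam_gt0 : 0 < lam. Proof. exact: eigenvalue_gt0 p. Qed.
Let Rf_ge0 : 0 <= Rf. Proof. by rewrite sumr_ge0 // => j _; apply: ltW. Qed.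

Lemma disjoint_E1 i j : ~~ (on_pair p q i j || on_pair r t i j) -> E i j = 1.
Proof. by move=> off; apply/eqP; apply: contraNT off; apply: E_disjoint. Qed.

Lemma disjoint_rows :
  [/\ lam * u p = s + (x - 1) * u q, lam * u q = s + (x^-1 - 1) * u p,
      lam * u r = s + (y - 1) * u t & lam * u t = s + (y^-1 - 1) * u r].
Proof.
case: distinct => pq pr pt [qr qt rt].
split; rewrite -?E_recip; apply: eigen_row1 => j ja; apply: disjoint_E1.
- by rewrite on_pair_l // on_pairNl ?orbF.
- by rewrite on_pair_r // on_pairNl ?orbF.
- by rewrite on_pairNl ?on_pair_l // eq_sym.
- by rewrite on_pairNl ?on_pair_r // eq_sym.
Qed.

Lemma disjoint_E_free i j : free i -> E i j = 1 /\ E j i = 1.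
Proof.
rewrite !inE !negb_or => /and4P[ip iq ir it].
by split; apply: disjoint_E1; [rewrite !on_pairNl | rewrite !on_pairNr].
Qed.

Lemma disjoint_row_free i : free i -> lam * u i = s.
Proof. by move=> i_free; apply: eigen_row0 => j; case: (disjoint_E_free j i_free). Qed.

Lemma disjoint_sum : s = u p + u q + u r + u t + Rf.
Proof.
case: distinct => pq pr pt [qr qt rt].
rewrite (bigD1 p) //= (bigD1 q) 1?eq_sym //= (bigD1 r) /=; last by rewrite eq_sym pr eq_sym qr.
rewrite (bigD1 t) /=; last by rewrite eq_sym pt eq_sym qt eq_sym rt.
by rewrite !addrA; congr (_ + _); apply: eq_bigl => j; rewrite !inE !negb_or !andbA.
Qed.

Lemma disjoint_E_cross : E p t = 1 /\ E r q = 1.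
Proof.
case: distinct => pq pr pt [qr qt rt].
split; apply: disjoint_E1.
  by rewrite on_pair_l // on_pairNl ?orbF // eq_sym.
by rewrite on_pairNl ?on_pair_l // eq_sym.
Qed.

Lemma disjoint_diff_qp : lam * (x * u q - u p) = (x - 1) * (u r + u t + Rf).
Proof.
have [row_p row_q _ _] := disjoint_rows.
have x_row_q : x * (lam * u q) = x * s + (1 - x) * u p.
  by rewrite row_q mulrDr mulrA mulrBr mulfV ?mulr1 // gt_eqF.
by rewrite disjoint_sum in row_p x_row_q; lra.
Qed.

Lemma disjoint_diff_tr : lam * (y * u t - u r) = (y - 1) * (u p + u q + Rf).
Proof.
have [_ _ row_r row_t] := disjoint_rows.
have y_row_t : y * (lam * u t) = y * s + (1 - y) * u r.
  by rewrite row_t mulrDr mulrA mulrBr mulfV ?mulr1 // gt_eqF.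
by rewrite disjoint_sum in row_r y_row_t; lra.
Qed.

Lemma disjoint_diff_cross :
  lam * (u p - u t) = (x - 1) * u q + (1 - y^-1) * u r /\
  lam * (u r - u q) = (y - 1) * u t + (1 - x^-1) * u p.
Proof. by have [? ? ? ?] := disjoint_rows; split; lra. Qed.

Lemma disjoint_diff_free i : free i ->
  lam * (u p - u i) = (x - 1) * u q /\ lam * (u i - u q) = (1 - x^-1) * u p.
Proof. by move/disjoint_row_free=> row_i; have [? ? _ _] := disjoint_rows; split; lra. Qed.

Hypotheses (x_gt1 : 1 < x) (y_gt1 : 1 < y).

Lemma disjoint_cycle : [/\ G p t, G t r, G r q & G q p].
Proof.
have [E_pt E_rq] := disjoint_E_cross; have [diff_pt diff_rq] := disjoint_diff_cross.
have [xV_lt1 yV_lt1] : x^-1 < 1 /\ y^-1 < 1 by rewrite !invf_lt1.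
split.
- rewrite efficiency_graph1 //; apply: ler_of_eigen_diff lam_gt0 diff_pt _.
  by rewrite addr_ge0 ?mulr_ge0 ?subr_ge0 // ltW.
- rewrite efficiency_graph_recipE; apply: ler_of_eigen_diff lam_gt0 disjoint_diff_tr _.
  by rewrite mulr_ge0 ?subr_ge0 ?addr_ge0 // ltW.
- rewrite efficiency_graph1 //; apply: ler_of_eigen_diff lam_gt0 diff_rq _.
  by rewrite addr_ge0 ?mulr_ge0 ?subr_ge0 // ltW.
- rewrite efficiency_graph_recipE; apply: ler_of_eigen_diff lam_gt0 disjoint_diff_qp _.
  by rewrite mulr_ge0 ?subr_ge0 ?addr_ge0 // ltW.
Qed.

Lemma disjoint_arcs_free i : free i -> G p i /\ G i q.
Proof.
move=> i_free; have [diff_p diff_q] := disjoint_diff_free i_free.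
have [[_ E_ip] [E_iq _]] := (disjoint_E_free p i_free, disjoint_E_free q i_free).
rewrite !efficiency_graph1 //; split.
  by apply: ler_of_eigen_diff lam_gt0 diff_p _; rewrite mulr_ge0 ?subr_ge0 // ltW.
apply: ler_of_eigen_diff lam_gt0 diff_q _.
by rewrite mulr_ge0 ?subr_ge0 ?invf_le1 // ltW.
Qed.

Lemma disjoint_strongly_connected_gt1 : strongly_connected G.
Proof.
have [p_t t_r r_q q_p] := disjoint_cycle.
have p_r : connect G p r := connect_trans (connect1 p_t) (connect1 t_r).
have r_p : connect G r p := connect_trans (connect1 r_q) (connect1 q_p).
apply: (strongly_connected_hub (h := p)) => i.
have [/disjoint_arcs_free[p_i i_q] | ] := boolP (free i).
  by split; [apply: connect1 | apply: connect_trans (connect1 i_q) (connect1 q_p)].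
rewrite !inE negbK => /or4P[] /eqP ->.
- by rewrite connect0.
- by split; [apply: connect_trans p_r (connect1 r_q) | apply: connect1].
- by [].
- by split; [apply: connect1 | apply: connect_trans (connect1 t_r) r_p].
Qed.

End Disjoint.

Lemma disjoint_strongly_connected p q r t : uniq [:: p; q; r; t] ->
  E p q != 1 -> E r t != 1 ->
  (forall i j, E i j != 1 -> on_pair p q i j || on_pair r t i j) ->
  strongly_connected G.
Proof.
have recip_gt1 i j : E i j < 1 -> 1 < E j i by rewrite (E_recip j i) invf_gt1.
wlog x_gt1 : p q / 1 < E p q.
  move=> wlog_x pqrt Epq Ert E_dis.
  have [/recip_gt1 x_lt1 | x_gt1 | x_eq1] := ltgtP (E p q) 1; last by rewrite x_eq1 eqxx in Epq.
    apply: (wlog_x q p x_lt1 _ _ Ert); rewrite ?gt_eqF //.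
      by rewrite (perm_uniq (_ : perm_eq _ [:: p; q; r; t])) // (perm_catCA [:: q] [:: p]).
    by move=> i j /E_dis; rewrite on_pairC.
  exact: wlog_x x_gt1 pqrt Epq Ert E_dis.
wlog y_gt1 : r t / 1 < E r t.
  move=> wlog_y pqrt Epq Ert E_dis.
  have [/recip_gt1 y_lt1 | y_gt1 | y_eq1] := ltgtP (E r t) 1; last by rewrite y_eq1 eqxx in Ert.
    apply: (wlog_y t r y_lt1 _ Epq); rewrite ?gt_eqF //.
      by rewrite (perm_uniq (_ : perm_eq _ [:: p; q; r; t])) // !perm_cons (perm_catC [:: t]).
    by move=> i j /E_dis; rewrite (on_pairC r).
  exact: wlog_y y_gt1 pqrt Epq Ert E_dis.
by move=> pqrt _ _ E_dis; apply: (disjoint_strongly_connected_gt1 pqrt E_dis).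
Qed.

Lemma two_pairs_strongly_connected a b c d : a != b -> c != d -> ~~ on_pair a b c d ->
  E a b != 1 -> E c d != 1 ->
  (forall i j, E i j != 1 -> on_pair a b i j || on_pair c d i j) ->
  strongly_connected G.
Proof.
move=> ab cd abcd Eab Ecd E_supp.
have E_recip_neq1 i j : E i j != 1 -> E j i != 1.
  by apply: contra => /eqP Eji; rewrite E_recip Eji invr1.
have [abcd_uniq | abcd_shared] := boolP (uniq [:: a; b; c; d]).
  exact: (disjoint_strongly_connected abcd_uniq Eab Ecd E_supp).
have [ac | ca] := eqVneq c a.
  subst c; have abd : uniq [:: a; b; d].
    by move: abcd; rewrite on_pair_l //= !inE !negb_or ab cd eq_sym => ->.
  exact: (star_strongly_connected abd Eab Ecd E_supp).
have [da | da] := eqVneq d a.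
  subst d; have abc : uniq [:: a; b; c].
    move: abcd; rewrite /on_pair (negbTE ca) eqxx /= !inE !negb_or ab => /andP[cb _].
    by rewrite eq_sym ca eq_sym cb.
  apply: (star_strongly_connected abc Eab (E_recip_neq1 _ _ Ecd)) => i j /E_supp.
  by rewrite (on_pairC c).
have [cb | cb] := eqVneq c b.
  subst c; have bad : uniq [:: b; a; d].
    by rewrite /= !inE !negb_or eq_sym ab cd eq_sym da.
  apply: (star_strongly_connected bad (E_recip_neq1 _ _ Eab) Ecd) => i j /E_supp.
  by rewrite (on_pairC a).
have [db | db] := eqVneq d b.
  subst d; have bac : uniq [:: b; a; c].
    by rewrite /= !inE !negb_or eq_sym ab eq_sym cd eq_sym ca.
  apply: (star_strongly_connected bac (E_recip_neq1 _ _ Eab) (E_recip_neq1 _ _ Ecd)).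
  by move=> i j /E_supp; rewrite (on_pairC a) (on_pairC c).
move: abcd_shared; rewrite /= !inE !negb_or ab cd.
by rewrite (eq_sym a c) ca (eq_sym a d) da (eq_sym b c) cb (eq_sym b d) db.
Qed.

End PerturbedEigenvector.

Theorem theorem6 (R : realFieldType) (n : nat) (A : 'M[R]_n) (w : 'cV[R]_n) :
  is_PCM A -> double_perturbed A -> principal_eigenvector A w -> efficient A w.
Proof.
move=> A_PCM [B [B_PCM [B_cons [i1 [j1 [i2 [j2 [[ij1 ij2 pairs_neq A1 A2] A_diff]]]]]]]].
move=> [w_gt0 [lam [eig _]]].
pose b i := B i i1.
have b_gt0 i : 0 < b i by case: (B_PCM i i1).
have B_ratio i j : B i j = b i / b j := consistent_PCM_ratio B_PCM B_cons i1 i j.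
pose E i j := A i j / (b i / b j).
pose u i := w i 0 / b i.
have E_neq1 i j : (E i j != 1) = (A i j != B i j).
  rewrite /E -B_ratio; congr (~~ _); apply/eqP/eqP => [/divr1_eq // | ->].
  by rewrite divff // gt_eqF //; case: (B_PCM i j).
have E_recip i j : E i j = (E j i)^-1.
  by rewrite /E -!B_ratio (proj2 (A_PCM i j)) (proj2 (B_PCM i j)) invf_div invrK mulrC.
have E_eigen : forall i, \sum_j E i j * u j = lam * u i.
  apply: eigen_scale => [i | i]; first by rewrite gt_eqF.
  by have := congr1 (fun M : 'cV[R]_n => M i 0) eig; rewrite !mxE.
apply: efficient_of_strongly_connected => // i j.
rewrite -(eq_connect (efficiency_graph_scale _ (w ^~ 0) b_gt0)).
apply: (two_pairs_strongly_connected _ _ E_recip E_eigen ij1 ij2); rewrite ?E_neq1 //.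
- by move=> k; rewrite divr_gt0.
- by move=> k l; rewrite !divr_gt0 //; case: (A_PCM k l).
- by apply/negP => /orP[] /andP[/eqP e1 /eqP e2]; apply: pairs_neq; rewrite e1 e2 !eqxx ?orbT.
- by move=> k l; rewrite E_neq1 => /A_diff; rewrite /on_pair; case=> ->; rewrite ?orbT.
Qed.
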